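(* Let $\mathcal X\subseteq[0,1]$ be a Borel set with $0,1\in\mathcal X$, fix $\mu\in(0,1)$, and let $\mathcal H_\mu=\{P\in\mathcal P_{\mathcal X}:\mathbb E_P[X]=\mu\}$. Define $F_\mu:\mathcal X\to[1,+\infty)$ by $F_\mu(x)=1+\frac1\mu(x-\mu)$ if $x\ge\mu$ and $F_\mu(x)=1+\frac1{\mu-1}(x-\mu)$ if $x<\mu$. Then for any $x\in\mathcal X$ there is $P_x\in\mathcal H_\mu$ such that $P_x(\{x\})=1/F_\mu(x)>0$. Moreover, $F_\mu(x)\ge E(x)$ for all $x\in\mathcal X$ and every e-variable $E$ for $\mathcal H_\mu$.
   Context: $\mathcal P_{\mathcal X}$ is the set of Borel probability measures on $\mathcal X$. An e-variable for $\mathcal H_\mu$ is a Borel $E:\mathcal X\to[0,+\infty)$ with $\mathbb E_P[E]\le1$ for all $P\in\mathcal H_\mu$. *)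

From HB Require Import structures.
From mathcomp Require Import all_boot all_order all_algebra.
From mathcomp Require Import all_classical all_reals all_analysis.
Set Implicit Arguments. Unset Strict Implicit. Unset Printing Implicit Defensive.
Import Order.TTheory GRing.Theory Num.Theory.
Local Open Scope classical_set_scope.
Local Open Scope ring_scope.

(* A Borel probability measure on the Borel set X ⊆ R is represented as a
   Borel probability measure on R concentrated on X (P (~` X) = 0). *)
Definition prob_on {R : realType} (X : set R) (P : probability R R) : Prop :=
  P (~` X) = 0%E.

Definition H_mu {R : realType} (X : set R) (mu : R) (P : probability R R) : Prop :=
  prob_on X P /\ (\int[P]_(x in X) (x%:E) = mu%:E)%E.

Definition evariable {R : realType} (X : set R) (mu : R) (E : R -> R) : Prop :=
  measurable_fun X E /\ (forall x, X x -> 0 <= E x) /\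
  forall P : probability R R, H_mu X mu P -> (\int[P]_(x in X) (E x)%:E <= 1)%E.

Definition F_mu {R : realType} (mu x : R) : R :=
  if mu <= x then 1 + mu^-1 * (x - mu) else 1 + (mu - 1)^-1 * (x - mu).

(* For x >= mu, the law with mass mu / x at x and the rest at 0 has mean mu;
   for x < mu, so does the law with mass (1 - mu) / (1 - x) at x and the rest
   at 1.  In both cases the mass at x is 1 / F_mu x, so for any e-variable E,
   1 >= E_P[E] >= P {x} * E x = E x / F_mu x. *)

From HB Require Import structures.
From mathcomp Require Import all_boot all_order all_algebra.
From mathcomp Require Import all_classical all_reals all_analysis.
From mathcomp Require Import measurable_realfun ring lra.
Set Implicit Arguments.
Unset Strict Implicit.
Unset Printing Implicit Defensive.
Import Order.TTheory GRing.Theory Num.Theory.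
Local Open Scope classical_set_scope.
Local Open Scope ring_scope.

Section two_point_distribution.
Context {R : realType}.

Definition two_point_pick (a b : R) (t : bool) : R := if t then a else b.

Lemma measurable_two_point_pick (a b : R) :
  measurable_fun setT (two_point_pick a b).
Proof. exact: measurable_fun_ifT. Qed.

HB.instance Definition _ (a b : R) :=
  isMeasurableFun.Build _ _ bool R (two_point_pick a b)
    (measurable_two_point_pick a b).

Definition two_point (p a b : R) : probability R R :=
  distribution (bernoulli_prob p) (two_point_pick a b).

Variables (p a b : R).
Hypothesis p01 : 0 <= p <= 1.

Lemma two_point_pick_preimage (D : set R) :
  D a -> D b -> two_point_pick a b @^-1` D = setT.
Proof. by move=> Da Db; apply/seteqP; split => // -[]. Qed.

Lemma ge0_integral_two_point (D : set R) (f : R -> \bar R) :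
  measurable D -> D a -> D b -> measurable_fun D f ->
  (forall x, D x -> 0 <= f x)%E ->
  (\int[two_point p a b]_(x in D) f x = p%:E * f a + (1 - p)%:E * f b)%E.
Proof.
move=> mD Da Db mf f0.
rewrite ge0_integral_pushforward //; last by move=> x /set_mem /f0.
  rewrite two_point_pick_preimage // integral_bernoulli_prob //.
  by case => /=; apply: f0.
Qed.

Lemma two_point_setC (D : set R) : D a -> D b -> two_point p a b (~` D) = 0%E.
Proof.
move=> Da Db; rewrite /= /distribution /pushforward.
suff -> : two_point_pick a b @^-1` (~` D) = set0 by rewrite measure0.
by apply/seteqP; split => // -[] /=.
Qed.

Lemma two_point_set1 : a != b -> two_point p a b [set a] = p%:E.
Proof.
move=> ab; rewrite /= /distribution /pushforward bernoulli_probE //.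
rewrite !diracE mem_set // memNset /= ?mule1 ?mule0 ?adde0 //.
by apply/eqP; rewrite eq_sym.
Qed.

End two_point_distribution.

Section F_mu_closed_forms.
Context {R : realType} (mu : R).
Hypotheses (mu_gt0 : 0 < mu) (mu_lt1 : mu < 1).

Let mu_neq0 : mu != 0. Proof. exact: lt0r_neq0. Qed.
Let onem_mu_neq0 : 1 - mu != 0. Proof. by rewrite subr_eq0 gt_eqF. Qed.
Let mu_sub1_neq0 : mu - 1 != 0. Proof. by rewrite subr_eq0 lt_eqF. Qed.

Lemma F_muE_ge (x : R) : mu <= x -> F_mu mu x = x / mu.
Proof. by move=> mux; rewrite /F_mu mux; field. Qed.

Lemma F_muE_lt (x : R) : x < mu -> F_mu mu x = (1 - x) / (1 - mu).
Proof.
move=> xmu; rewrite /F_mu leNgt xmu /=.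
by field; rewrite onem_mu_neq0 mu_sub1_neq0.
Qed.

Lemma F_mu_ge1 (x : R) : 0 <= x <= 1 -> 1 <= F_mu mu x.
Proof.
move=> /andP[x_ge0 x_le1]; have [mux|xmu] := leP mu x.
  by rewrite F_muE_ge // ler_pdivlMr //; lra.
by rewrite F_muE_lt // ler_pdivlMr ?subr_gt0 //; lra.
Qed.

Lemma F_mu_gt0 (x : R) : 0 <= x <= 1 -> 0 < F_mu mu x.
Proof. by move/F_mu_ge1; apply: lt_le_trans. Qed.

Lemma invF_mu_itv (x : R) : 0 <= x <= 1 -> 0 <= (F_mu mu x)^-1 <= 1.
Proof.
move=> x01; rewrite invr_ge0 ltW ?F_mu_gt0 //=.
by rewrite invf_le1 ?F_mu_gt0 ?F_mu_ge1.
Qed.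

Definition opposite_endpoint (x : R) : R := if mu <= x then 0 else 1.

Lemma opposite_endpoint_neq (x : R) : x != opposite_endpoint x.
Proof.
rewrite /opposite_endpoint; have [h|h] := leP mu x; apply/eqP => e.
  by rewrite e leNgt mu_gt0 in h.
by rewrite e in h; have := lt_trans mu_lt1 h; rewrite ltxx.
Qed.

Lemma F_mu_two_point_mean (x : R) :
  (F_mu mu x)^-1 * x + (1 - (F_mu mu x)^-1) * opposite_endpoint x = mu.
Proof.
rewrite /opposite_endpoint; have [mux|xmu] := leP mu x.
  rewrite F_muE_ge // mulr0 addr0 invf_div; field.
  exact/lt0r_neq0/(lt_le_trans mu_gt0).
rewrite F_muE_lt // mulr1 invf_div; field.
by rewrite subr_eq0 gt_eqF // (lt_trans xmu).
Qed.

End F_mu_closed_forms.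

Section two_point_in_H_mu.
Context {R : realType} (X : set R) (mu : R).
Hypothesis mX : measurable X.
Variables (p a b : R).
Hypotheses (p01 : 0 <= p <= 1) (Xa : X a) (Xb : X b).

Lemma two_point_H_mu : (forall x, X x -> 0 <= x) -> p * a + (1 - p) * b = mu ->
  H_mu X mu (two_point p a b).
Proof.
move=> X_ge0 mean; split; first exact: two_point_setC.
by rewrite ge0_integral_two_point // -!EFinM -EFinD mean.
Qed.

Lemma evariable_two_point_le (E : R -> R) : evariable X mu E ->
  H_mu X mu (two_point p a b) -> p * E a <= 1.
Proof.
case=> mE [E_ge0 E_le1] /E_le1.
rewrite ge0_integral_two_point //.
- rewrite -!EFinM -EFinD lee_fin; apply: le_trans.
  by rewrite lerDl mulr_ge0 ?E_ge0 // subr_ge0; case/andP: p01.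
- exact/measurable_EFinP.
Qed.

End two_point_in_H_mu.

Theorem lemma3 (R : realType) (X : set R) (mu : R) :
  measurable X -> X `<=` `[0, 1] -> X 0 -> X 1 -> 0 < mu < 1 ->
  (forall x, X x ->
     exists P : probability R R,
       H_mu X mu P /\ P [set x] = ((F_mu mu x)^-1)%:E /\ 0 < (F_mu mu x)^-1) /\
  (forall E : R -> R, evariable X mu E -> forall x, X x -> E x <= F_mu mu x).
Proof.
move=> mX sX X0 X1 /andP[mu_gt0 mu_lt1].
have X01 x : X x -> 0 <= x <= 1 by move/sX; rewrite /= in_itv.
have F_gt0 x : X x -> 0 < F_mu mu x by move/X01; exact: F_mu_gt0.
have p01 x : X x -> 0 <= (F_mu mu x)^-1 <= 1 by move/X01; exact: invF_mu_itv.
have Xopp x : X (opposite_endpoint mu x) by rewrite /opposite_endpoint; case: ifP.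
have HP x : X x -> H_mu X mu (two_point (F_mu mu x)^-1 x (opposite_endpoint mu x)).
  move=> Xx; apply: (two_point_H_mu mX (p01 _ Xx)) => //.
    by move=> y /X01 /andP[].
  exact: F_mu_two_point_mean.
split.
  move=> x Xx; exists (two_point (F_mu mu x)^-1 x (opposite_endpoint mu x)).
  split; [exact: HP | split; last by rewrite invr_gt0 F_gt0].
  by rewrite two_point_set1 ?(p01 _ Xx) ?opposite_endpoint_neq.
move=> E hE x Xx.
have := evariable_two_point_le mX (p01 _ Xx) Xx (Xopp x) hE (HP _ Xx).
by rewrite mulrC -ler_pdivlMr ?invr_gt0 ?F_gt0 // invrK mul1r.
Qed.
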